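(* Let $r\ge1$, $G\subset\mathbb{Z}_2^r$ a subgroup with $1^r\in G$, $D_G=\Delta G$, $C_G=D_G^\perp$. For every $d\in D_G$, $\Delta^d$ is a maximal isotropic subgroup of $C_G^d=\mathbb{Z}_2^d\cap C_G$.
   Context: $\Delta:\mathbb{Z}_2^r\to\mathbb{Z}_2^{r+r}$, $g\mapsto(g,g)$. For $c\in\mathbb{Z}_2^{r+r}$, $|c|_l$ and $|c|_r$ are the numbers of ones among the first $r$ and last $r$ coordinates, $|c|=|c|_l-|c|_r$; products of codewords are componentwise. For a subgroup $A$, $A^\perp=\{\beta:|\beta a|\in2\mathbb{Z}\ \forall a\in A\}$. For $d\in\mathbb{Z}_2^{r+r}$, $\mathbb{Z}_2^d=\{\alpha:d\alpha=\alpha\}$ and $\Delta^d=\mathbb{Z}_2^d\cap\Delta(\mathbb{Z}_2^r)$. A subgroup $H$ is isotropic if $|\alpha\beta|\in2\mathbb{Z}$ for all $\alpha,\beta\in H$; maximal isotropic means not properly contained in another isotropic subgroup of $C_G^d$. *)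

From HB Require Import structures.
From mathcomp Require Import all_boot all_order all_algebra.
Set Implicit Arguments. Unset Strict Implicit. Unset Printing Implicit Defensive.
Import Order.TTheory GRing.Theory Num.Theory.
Local Open Scope ring_scope.

Notation Z2vec n := 'rV['F_2]_n.

Definition is_subgroup n (A : {set Z2vec n}) : Prop :=
  0 \in A /\ (forall a b, a \in A -> b \in A -> a - b \in A).

Definition Delta r (g : Z2vec r) : Z2vec (r + r) := row_mx g g.

Definition mulv n (a b : Z2vec n) : Z2vec n := \row_j (a 0 j * b 0 j).

Definition wt_l r (c : Z2vec (r + r)) : nat :=
  #|[set i : 'I_r | c 0 (lshift r i) == 1]|.
Definition wt_r r (c : Z2vec (r + r)) : nat :=
  #|[set i : 'I_r | c 0 (rshift r i) == 1]|.
Definition wt r (c : Z2vec (r + r)) : int := (wt_l c)%:Z - (wt_r c)%:Z.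

Definition even_int (z : int) : bool := (2 %| z)%Z.

Definition perp r (A : {set Z2vec (r + r)}) : {set Z2vec (r + r)} :=
  [set b | [forall a in A, even_int (wt (mulv b a))]].

Definition Zd r (d : Z2vec (r + r)) : {set Z2vec (r + r)} :=
  [set a | mulv d a == a].
Definition DeltaD r (d : Z2vec (r + r)) : {set Z2vec (r + r)} :=
  Zd d :&: [set Delta g | g in [set: Z2vec r]].

Definition DG r (G : {set Z2vec r}) : {set Z2vec (r + r)} := [set Delta g | g in G].
Definition CG r (G : {set Z2vec r}) : {set Z2vec (r + r)} := perp (DG G).

Definition isotropic r (H : {set Z2vec (r + r)}) : Prop :=
  forall a b, a \in H -> b \in H -> even_int (wt (mulv a b)).

Definition max_isotropic_in r (H K : {set Z2vec (r + r)}) : Prop :=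
  [/\ is_subgroup H, H \subset K, isotropic H &
      forall H' : {set Z2vec (r + r)}, is_subgroup H' -> H \subset H' ->
        H' \subset K -> isotropic H' -> H' = H].

From mathcomp Require Import all_boot all_order all_algebra.
Set Implicit Arguments. Unset Strict Implicit. Unset Printing Implicit Defensive.
Import Order.TTheory GRing.Theory Num.Theory.
Local Open Scope ring_scope.

(* Write d = Delta g0. Every diagonal vector has weight 0, and the product of
   two diagonal vectors is diagonal, so the whole diagonal is isotropic and
   lies in C_G; hence Delta^d is an isotropic subgroup of C_G^d. For
   maximality, take b = (x, y) in an isotropic H' with Delta^d <= H' <= Z_2^d.
   Outside the support of g0 both x and y vanish, and for i in the support
   the unit vector Delta e_i lies in Delta^d <= H', so
   |b Delta e_i| = [x_i = 1] - [y_i = 1] must be even, i.e. x_i = y_i.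
   Thus b = Delta x lies in Delta^d. *)

Lemma mulvBr n (a b c : Z2vec n) : mulv a (b - c) = mulv a b - mulv a c.
Proof. by apply/rowP => j; rewrite !mxE mulrBr. Qed.

Lemma is_subgroupI n (A B : {set Z2vec n}) :
  is_subgroup A -> is_subgroup B -> is_subgroup (A :&: B).
Proof.
move=> [A0 AB] [B0 BB]; split; first by rewrite inE A0.
by move=> a b /setIP [Aa Ba] /setIP [Ab Bb]; rewrite inE AB ?BB.
Qed.

Lemma F2_eq_of_even (u v : 'F_2) :
  even_int ((u == 1 : nat)%:Z - (v == 1 : nat)%:Z) -> u = v.
Proof. by case: u => [[|[|?]] ?]; case: v => [[|[|?]] ?] //= _; apply/val_inj. Qed.

Lemma F2_neq1 (u : 'F_2) : u != 1 -> u = 0.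
Proof. by case: u => [[|[|?]] ?] //= _; apply/val_inj. Qed.

Section Diagonal.

Variable r : nat.
Implicit Types (g h x y : Z2vec r) (d : Z2vec (r + r)).

Lemma mulv_row_mx x y (x' y' : Z2vec r) :
  mulv (row_mx x y) (row_mx x' y') = row_mx (mulv x x') (mulv y y').
Proof.
apply/rowP => j; rewrite mxE -(splitK j); case: (split j) => k /=;
  by rewrite ?(row_mxEl, row_mxEr) mxE.
Qed.

Lemma wt_row_mx x y :
  wt (row_mx x y) = #|[set i | x 0 i == 1]|%:Z - #|[set i | y 0 i == 1]|%:Z.
Proof.
by rewrite /wt /wt_l /wt_r; congr (_%:Z - _%:Z); apply: eq_card => i;
  rewrite !inE ?row_mxEl ?row_mxEr.
Qed.

Lemma Delta0 : Delta (0 : Z2vec r) = 0.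
Proof. exact: row_mx0. Qed.

Lemma DeltaB g h : Delta (g - h) = Delta g - Delta h.
Proof. by rewrite /Delta opp_row_mx add_row_mx. Qed.

Lemma mulv_Delta g h : mulv (Delta g) (Delta h) = Delta (mulv g h).
Proof. exact: mulv_row_mx. Qed.

Lemma wt_Delta g : wt (Delta g) = 0.
Proof. by rewrite wt_row_mx subrr. Qed.

Lemma card_mulv_delta x (i : 'I_r) :
  #|[set j | mulv x (delta_mx 0 i) 0 j == 1]| = (x 0 i == 1) :> nat.
Proof.
have -> : [set j | mulv x (delta_mx 0 i) 0 j == 1] =
          [set j | (j == i) && (x 0 i == 1)].
  apply/setP => j; rewrite !inE !mxE /=.
  by case: (eqVneq j i) => [->|_]; rewrite ?mulr1 ?mulr0.
case: (x 0 i == 1).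
  by rewrite (_ : [set j | _] = [set i]) ?cards1 //; apply/setP => j;
    rewrite !inE andbT.
by rewrite (_ : [set j | _] = set0) ?cards0 //; apply/setP => j;
  rewrite !inE andbF.
Qed.

Lemma wt_mulv_Delta_delta x y (i : 'I_r) :
  wt (mulv (row_mx x y) (Delta (delta_mx 0 i)))
    = (x 0 i == 1 : nat)%:Z - (y 0 i == 1 : nat)%:Z.
Proof. by rewrite mulv_row_mx wt_row_mx !card_mulv_delta. Qed.

Definition Delta_range : {set Z2vec (r + r)} := [set Delta g | g in [set: Z2vec r]].

Lemma is_subgroup_Zd d : is_subgroup (Zd d).
Proof.
split; first by rewrite inE; apply/eqP/rowP => j; rewrite !mxE mulr0.
by move=> a b; rewrite !inE mulvBr => /eqP -> /eqP ->.
Qed.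

Lemma is_subgroup_Delta_range : is_subgroup Delta_range.
Proof.
split; first by rewrite -Delta0 imset_f.
by move=> _ _ /imsetP [g _ ->] /imsetP [h _ ->]; rewrite -DeltaB imset_f.
Qed.

Lemma is_subgroup_DeltaD d : is_subgroup (DeltaD d).
Proof. exact: is_subgroupI (is_subgroup_Zd d) is_subgroup_Delta_range. Qed.

Lemma isotropic_DeltaD d : isotropic (DeltaD d).
Proof.
by move=> _ _ /setIP [_ /imsetP [g _ ->]] /setIP [_ /imsetP [h _ ->]];
  rewrite mulv_Delta wt_Delta.
Qed.

Lemma DeltaD_sub_CG d (G : {set Z2vec r}) : DeltaD d \subset Zd d :&: CG G.
Proof.
apply: setIS; apply/subsetP => _ /imsetP [g _ ->].
rewrite inE; apply/forall_inP => _ /imsetP [h _ ->].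
by rewrite mulv_Delta wt_Delta.
Qed.

Lemma mem_DeltaD_Delta g0 g : (Delta g \in DeltaD (Delta g0)) = (mulv g0 g == g).
Proof.
rewrite !inE mulv_Delta imset_f ?inE // andbT.
by apply/eqP/eqP => [/eq_row_mx [] | ->].
Qed.

Lemma Delta_delta_in_DeltaD g0 (i : 'I_r) :
  g0 0 i = 1 -> Delta (delta_mx 0 i) \in DeltaD (Delta g0).
Proof.
move=> g0i; rewrite mem_DeltaD_Delta; apply/eqP/rowP => j; rewrite !mxE.
by case: (eqVneq j i) => [->|_]; rewrite ?g0i ?mulr1 ?mulr0.
Qed.

Lemma Zd_orth_delta_in_DeltaD g0 b :
  b \in Zd (Delta g0) ->
  (forall i, g0 0 i = 1 -> even_int (wt (mulv b (Delta (delta_mx 0 i))))) ->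
  b \in DeltaD (Delta g0).
Proof.
rewrite -(hsubmxK b); set x := lsubmx b; set y := rsubmx b.
rewrite inE mulv_row_mx => /eqP /eq_row_mx [gx gy] orth.
have -> : y = x.
  apply/rowP => i; have [g0i|] := boolP (g0 0 i == 1).
    apply/esym/F2_eq_of_even; rewrite -wt_mulv_Delta_delta.
    exact: orth (eqP g0i).
  by move/F2_neq1 => g0i; rewrite -gx -gy !mxE g0i !mul0r.
by rewrite mem_DeltaD_Delta gx.
Qed.

Lemma max_isotropic_DeltaD g0 (K : {set Z2vec (r + r)}) :
  DeltaD (Delta g0) \subset K -> K \subset Zd (Delta g0) ->
  max_isotropic_in (DeltaD (Delta g0)) K.
Proof.
move=> DK KZ; split; [exact: is_subgroup_DeltaD | by [] | exact: isotropic_DeltaD|].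
move=> H' _ DH' H'K isoH'; apply/eqP; rewrite eqEsubset DH' andbT.
apply/subsetP => b H'b; apply: Zd_orth_delta_in_DeltaD.
  exact: subsetP KZ b (subsetP H'K b H'b).
by move=> i /Delta_delta_in_DeltaD /(subsetP DH'); apply: isoH'.
Qed.

End Diagonal.

Theorem mainTheorem12 (r : nat) (hr : (1 <= r)%N) (G : {set 'rV['F_2]_r})
  (hG : is_subgroup G) (h1 : const_mx 1 \in G) :
  forall d, d \in DG G -> max_isotropic_in (DeltaD d) (Zd d :&: CG G).
Proof.
move=> _ /imsetP [g0 _ ->].
by apply: max_isotropic_DeltaD; [exact: DeltaD_sub_CG | exact: subsetIl].
Qed.
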